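(* Let $h>0$ and $1>\theta_1>\theta_2>0$, and let $\Theta\in\mathbb{R}^{2\times2}$ be given by \[ \Theta=\frac{1}{4h}\begin{pmatrix}\cot(\pi\theta_1)&\cot\left(\pi\frac{\theta_1+\theta_2}{2}\right)-\cot\left(\pi\frac{\theta_1-\theta_2}{2}\right)\\ \cot\left(\pi\frac{\theta_1+\theta_2}{2}\right)-\cot\left(\pi\frac{\theta_2-\theta_1}{2}\right)&\cot(\pi\theta_2)\end{pmatrix}. \] (i) If $\theta_1\le1/2$, then $\Theta$ is invertible for all $\theta_2\in(0,\theta_1)$. (ii) If $\theta_1>1/2$, then $\Theta$ is invertible for all $\theta_2\in(0,\theta_1)$ except for exactly one value $\hat\theta_2(\theta_1)$, which lies in $(0,1/2)$. The graph of $\hat\theta_2:(1/2,1)\to(0,1/2)$ is the image of the curve \[ (\pi/4,3\pi/4)\to(1/2,1)\times(0,1/2),\qquad t\mapsto\bigl((t+f(t))/\pi,\,(t-f(t))/\pi\bigr), \] where $f(x)=\operatorname{arccot}\left(\sqrt{\tfrac12\left(\cot(x)^2+\sqrt{4-3\cot(x)^4}\right)}\right)$ for $x\in(\pi/4,3\pi/4)$. *)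

From Stdlib Require Import Reals.
From mathcomp Require Import all_boot all_algebra.
From mathcomp Require Import Rstruct.

Set Implicit Arguments.
Unset Strict Implicit.
Unset Printing Implicit Defensive.

Open Scope R_scope.

Definition cot (x : R) : R := cos x / sin x.

(* principal arccotangent, with values in (0, PI) *)
Definition arccot (y : R) : R := PI / 2 - atan y.

Definition Theta_entry (t1 t2 : R) (i j : nat) : R :=
  match i, j with
  | 0%nat, 0%nat => cot (PI * t1)
  | 0%nat, _ => cot (PI * ((t1 + t2) / 2)) - cot (PI * ((t1 - t2) / 2))
  | _, 0%nat => cot (PI * ((t1 + t2) / 2)) - cot (PI * ((t2 - t1) / 2))
  | _, _ => cot (PI * t2)
  end.

Definition Theta (h t1 t2 : R) : 'M[R]_2 :=
  \matrix_(i < 2, j < 2) (/ (4 * h) * Theta_entry t1 t2 i j).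

Definition f_curve (x : R) : R :=
  arccot (sqrt (/ 2 * (cot x ^ 2 + sqrt (4 - 3 * cot x ^ 4)))).

From Stdlib Require Import Reals Lra ClassicalEpsilon.
From mathcomp Require Import all_boot all_algebra.
From mathcomp Require Import Rstruct.
Import GRing.Theory.
Open Scope R_scope.

(* With [u = PI (t1 + t2) / 2] and [v = PI (t1 - t2) / 2], clearing the positive sines
   shows that [det Theta] vanishes exactly when [theta_poly (cos (PI t1)) (cos (PI t2))]
   does.  Since [theta_poly x y > 0] whenever [x y >= 0], [Theta] is invertible for
   [t1 <= 1/2], and for [t1 > 1/2] a singular [t2] must have [cos (PI t2) > 0]; for fixed
   [x < 0] the polynomial [theta_poly x] changes sign on [(0, 1)] and is injective on its
   positive roots, so there is exactly one singular [t2].  In the variables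
   [X = cot u ^ 2], [Y = cot v ^ 2] the same condition reads [Y^2 - X Y + X^2 = 1] with
   [X < Y]; solving this quadratic for [Y] gives [f_curve]. *)

Section Det22.
Local Open Scope ring_scope.

Lemma det_mx22 (R : comPzRingType) (A : 'M[R]_2) :
  \det A = A 0 0 * A 1 1 - A 0 1 * A 1 0.
Proof.
rewrite (expand_det_row _ 0) !big_ord_recl big_ord0 /cofactor !det_mx11 !mxE /=.
have -> : lift (0 : 'I_2) (0 : 'I_1) = 1 by apply/val_inj.
have -> : lift (1 : 'I_2) (0 : 'I_1) = 0 by apply/val_inj.
by rewrite expr0 expr1 addr0 mul1r mulN1r mulrN.
Qed.

End Det22.

Definition Theta_det (t1 t2 : R) : R :=
  Theta_entry t1 t2 0 0 * Theta_entry t1 t2 1 1 -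
  Theta_entry t1 t2 0 1 * Theta_entry t1 t2 1 0.

Lemma det_Theta h t1 t2 : (\det (Theta h t1 t2))%R = (/ (4 * h)) ^ 2 * Theta_det t1 t2.
Proof. by rewrite det_mx22 !mxE -!RmultE -!RminusE /Theta_det /=; ring. Qed.

Lemma Theta_unitmxP h t1 t2 : 0 < h ->
  reflect (Theta_det t1 t2 <> 0) (Theta h t1 t2 \in unitmx).
Proof.
move=> h_gt0; rewrite unitmxE unitfE det_Theta.
have k_neq0 : (/ (4 * h)) ^ 2 <> 0 by apply: pow_nonzero; apply: Rinv_neq_0_compat; lra.
apply: (iffP negP) => [det_neq0 d0 | d_neq0 /eqP det0].
  by apply/det_neq0/eqP; rewrite d0 Rmult_0_r.
by case: (Rmult_integral _ _ det0).
Qed.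

Lemma sin_pow2 a : sin a ^ 2 = 1 - cos a ^ 2.
Proof. by rewrite -!Rsqr_pow2; exact: sin2. Qed.

Definition theta_poly (x y : R) : R :=
  x * y * (x - y) ^ 2 + 4 * (1 - x ^ 2) * (1 - y ^ 2).

Lemma Theta_det_theta_poly t1 t2 :
  sin (PI * ((t1 + t2) / 2)) <> 0 -> sin (PI * ((t1 - t2) / 2)) <> 0 ->
  sin (PI * t1) <> 0 -> sin (PI * t2) <> 0 ->
  4 * Theta_det t1 t2 * (sin (PI * t1) * sin (PI * t2) *
    sin (PI * ((t1 + t2) / 2)) ^ 2 * sin (PI * ((t1 - t2) / 2)) ^ 2) =
  theta_poly (cos (PI * t1)) (cos (PI * t2)).
Proof.
rewrite /Theta_det /= /theta_poly.
set u := PI * ((t1 + t2) / 2); set v := PI * ((t1 - t2) / 2).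
have -> : PI * t1 = u + v by rewrite /u /v; field.
have -> : PI * t2 = u - v by rewrite /u /v; field.
have -> : PI * ((t2 - t1) / 2) = - v by rewrite /v; field.
rewrite /cot sin_neg cos_neg -!sin_pow2 sin_plus sin_minus cos_plus cos_minus.
move=> su sv s1 s2; field; repeat split => //.
Qed.

Definition cot_quartic (X Y : R) : R := Y ^ 2 - X * Y + X ^ 2 - 1.

Lemma theta_poly_cos_add_sub u v : sin u <> 0 -> sin v <> 0 ->
  theta_poly (cos (u + v)) (cos (u - v)) =
  4 * sin u ^ 4 * sin v ^ 4 * cot_quartic (cot u ^ 2) (cot v ^ 2).
Proof.
rewrite /theta_poly /cot_quartic -!sin_pow2 /cot sin_plus sin_minus cos_plus cos_minus.
by move=> su sv; field.
Qed.

Lemma sin_add_mul_sin_sub u v : sin u <> 0 -> sin v <> 0 ->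
  sin (u + v) * sin (u - v) = sin u ^ 2 * sin v ^ 2 * (cot v ^ 2 - cot u ^ 2).
Proof. by rewrite /cot sin_plus sin_minus => su sv; field. Qed.

Lemma cos_add_cot u v : sin u <> 0 -> sin v <> 0 ->
  cos (u + v) = sin u * sin v * (cot u * cot v - 1).
Proof. by rewrite /cot cos_plus => su sv; field. Qed.

Lemma theta_poly_pos x y : x ^ 2 < 1 -> y ^ 2 < 1 -> 0 <= x * y -> 0 < theta_poly x y.
Proof.
move=> x_lt1 y_lt1 xy_ge0; rewrite /theta_poly.
have : 0 <= x * y * (x - y) ^ 2 by apply: Rmult_le_pos => //; apply: pow2_ge_0.
have : 0 < (1 - x ^ 2) * (1 - y ^ 2) by apply: Rmult_lt_0_compat; lra.
lra.
Qed.

(* For [x < 0 < y, z], [theta_poly x y - theta_poly x z = (y - z) * Q] with every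
   monomial of [Q] negative. *)
Lemma theta_poly_root_unique x y z : -1 < x < 0 -> 0 < y -> 0 < z ->
  theta_poly x y = 0 -> theta_poly x z = 0 -> y = z.
Proof.
move=> x_bnd y_gt0 z_gt0; rewrite /theta_poly => Gy Gz.
set Q := x * (y ^ 2 + y * z + z ^ 2) - 2 * x ^ 2 * (y + z) + x ^ 3
         - 4 * (1 - x ^ 2) * (y + z).
have factor : (y - z) * Q = 0 by rewrite /Q; lra.
have Q_lt0 : Q < 0.
  have : x * (y ^ 2 + y * z + z ^ 2) < 0 by apply: Rmult_neg_pos; nra.
  have : 0 <= x ^ 2 * (y + z) by apply: Rmult_le_pos; nra.
  have : x ^ 3 < 0 by rewrite -[x ^ 3]/(x * x ^ 2); apply: Rmult_neg_pos; nra.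
  have : 0 < (1 - x ^ 2) * (y + z) by apply: Rmult_lt_0_compat; nra.
  rewrite /Q; lra.
by case: (Rmult_integral _ _ factor); lra.
Qed.

Lemma theta_poly_root_exists x : -1 < x < 0 -> exists y, 0 < y < 1 /\ theta_poly x y = 0.
Proof.
move=> x_bnd.
have G0 : - theta_poly x 0 < 0 by rewrite /theta_poly; nra.
have G1 : 0 < - theta_poly x 1 by rewrite /theta_poly; nra.
have cont : continuity (fun y => - theta_poly x y).
  by apply: derivable_continuous; rewrite /theta_poly; reg.
have [y [y_bnd Gy]] := IVT _ 0 1 cont Rlt_0_1 G0 G1.
have y_neq0 : y <> 0 by move=> y0; rewrite y0 in Gy; lra.
have y_neq1 : y <> 1 by move=> y1; rewrite y1 in Gy; lra.
exists y; lra.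
Qed.

Lemma sin_PI_mul_gt0 t : 0 < t < 1 -> 0 < sin (PI * t).
Proof. by move=> t_bnd; have PI_gt0 := PI_RGT_0; apply: sin_gt_0; nra. Qed.

Lemma cos_PI_mul_sq_lt1 t : 0 < t < 1 -> cos (PI * t) ^ 2 < 1.
Proof. by move=> /sin_PI_mul_gt0 s_gt0; have := sin_pow2 (PI * t); nra. Qed.

Lemma lt_half_of_cos_PI_mul_gt0 t : 0 <= t < 1 -> 0 < cos (PI * t) -> t < 1 / 2.
Proof.
move=> t_bnd c_gt0; have PI_gt0 := PI_RGT_0.
apply: Rnot_le_lt => t_ge; suff : cos (PI * t) <= 0 by lra.
by apply: cos_le_0; nra.
Qed.

Lemma Theta_det_eq0 t1 t2 : 0 < t2 < t1 -> t1 < 1 ->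
  Theta_det t1 t2 = 0 <-> theta_poly (cos (PI * t1)) (cos (PI * t2)) = 0.
Proof.
move=> t2_bnd t1_lt1.
have su := sin_PI_mul_gt0 ((t1 + t2) / 2) ltac:(lra).
have sv := sin_PI_mul_gt0 ((t1 - t2) / 2) ltac:(lra).
have s1 := sin_PI_mul_gt0 t1 ltac:(lra).
have s2 := sin_PI_mul_gt0 t2 ltac:(lra).
rewrite -Theta_det_theta_poly; try lra.
set k := _ * _ * _ * _.
have k_gt0 : 0 < k by rewrite /k /=; repeat apply: Rmult_lt_0_compat; lra.
split=> [-> | /Rmult_integral [/Rmult_integral [] |]]; lra.
Qed.

Definition Theta_singular (t1 t2 : R) : Prop := 0 < t2 < t1 /\ Theta_det t1 t2 = 0.

Lemma Theta_det_neq0 t1 t2 : 0 < t2 < t1 -> t1 <= 1 / 2 -> Theta_det t1 t2 <> 0.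
Proof.
move=> t2_bnd t1_le; have PI_gt0 := PI_RGT_0.
rewrite Theta_det_eq0; try lra.
have c1 : 0 <= cos (PI * t1) by apply: cos_ge_0; nra.
have c2 : 0 < cos (PI * t2) by apply: cos_gt_0; nra.
apply: Rgt_not_eq; apply: theta_poly_pos; try apply: cos_PI_mul_sq_lt1; try lra.
by apply: Rmult_le_pos; lra.
Qed.

Lemma Theta_singular_cos_gt0 t1 t2 : 1 / 2 < t1 < 1 -> Theta_singular t1 t2 ->
  0 < cos (PI * t2).
Proof.
move=> t1_bnd [t2_bnd]; rewrite Theta_det_eq0; try lra.
have PI_gt0 := PI_RGT_0.
have c1 : cos (PI * t1) < 0 by apply: cos_lt_0; nra.
move=> G0; apply: Rnot_le_lt => c2.
suff : 0 < theta_poly (cos (PI * t1)) (cos (PI * t2)) by lra.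
by apply: theta_poly_pos; try apply: cos_PI_mul_sq_lt1; try lra; nra.
Qed.

Lemma Theta_singular_unique t1 t2 t3 : 1 / 2 < t1 < 1 ->
  Theta_singular t1 t2 -> Theta_singular t1 t3 -> t2 = t3.
Proof.
move=> t1_bnd S2 S3; have PI_gt0 := PI_RGT_0.
have c2 := Theta_singular_cos_gt0 _ _ t1_bnd S2.
have c3 := Theta_singular_cos_gt0 _ _ t1_bnd S3.
case: S2 S3 => [t2_bnd G2] [t3_bnd G3].
move: G2 G3; rewrite !Theta_det_eq0; try lra.
have c1 : cos (PI * t1) < 0 by apply: cos_lt_0; nra.
have c1_sq := cos_PI_mul_sq_lt1 t1 ltac:(lra).
move=> G2 G3; apply: (Rmult_eq_reg_l PI); last by lra.
apply: cos_inj; try nra.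
by apply: (theta_poly_root_unique _ _ _ _ _ _ G2 G3) => //; nra.
Qed.

Lemma Theta_singular_exists t1 : 1 / 2 < t1 < 1 -> exists t2, Theta_singular t1 t2.
Proof.
move=> t1_bnd; have PI_gt0 := PI_RGT_0.
have c1 : cos (PI * t1) < 0 by apply: cos_lt_0; nra.
have c1_sq := cos_PI_mul_sq_lt1 t1 ltac:(lra).
have [y [y_bnd Gy]] := theta_poly_root_exists (cos (PI * t1)) ltac:(nra).
have a_bnd := acos_bound_lt y ltac:(lra).
set t2 := acos y / PI.
have PI_t2 : PI * t2 = acos y by rewrite /t2; field; lra.
have cos_t2 : cos (PI * t2) = y by rewrite PI_t2 cos_acos; lra.
have t2_bnd : 0 < t2 < 1 by nra.
have t2_lt : t2 < 1 / 2 by apply: lt_half_of_cos_PI_mul_gt0; lra.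
exists t2; split; first lra.
by rewrite Theta_det_eq0 ?cos_t2; lra.
Qed.

Definition theta2_hat (t1 : R) : R := epsilon (inhabits 0) (Theta_singular t1).

Lemma theta2_hat_spec t1 : 1 / 2 < t1 < 1 -> Theta_singular t1 (theta2_hat t1).
Proof. by move=> t1_bnd; apply: epsilon_spec; apply: Theta_singular_exists. Qed.

Lemma theta2_hat_bounds t1 : 1 / 2 < t1 < 1 -> 0 < theta2_hat t1 < 1 / 2.
Proof.
move=> t1_bnd; have S := theta2_hat_spec _ t1_bnd.
have := Theta_singular_cos_gt0 _ _ t1_bnd S; case: S => t2_bnd _ c2.
by split; [lra | apply: lt_half_of_cos_PI_mul_gt0; lra].
Qed.

Lemma Theta_det_eq0_theta2_hat t1 t2 : 1 / 2 < t1 < 1 -> 0 < t2 < t1 ->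
  Theta_det t1 t2 = 0 <-> t2 = theta2_hat t1.
Proof.
move=> t1_bnd t2_bnd; have S := theta2_hat_spec _ t1_bnd.
split=> [d0 | ->]; last by case: S.
exact: Theta_singular_unique t1_bnd (conj t2_bnd d0) S.
Qed.

Lemma Theta_singular_half_angles u v : 0 < v < u -> u + v < PI ->
  Theta_singular ((u + v) / PI) ((u - v) / PI) <->
  cot_quartic (cot u ^ 2) (cot v ^ 2) = 0.
Proof.
move=> v_bnd uv_lt; have PI_gt0 := PI_RGT_0.
have su : 0 < sin u by apply: sin_gt_0; lra.
have sv : 0 < sin v by apply: sin_gt_0; lra.
have PI_t1 : PI * ((u + v) / PI) = u + v by field; lra.
have PI_t2 : PI * ((u - v) / PI) = u - v by field; lra.
rewrite /Theta_singular Theta_det_eq0 ?PI_t1 ?PI_t2; try nra.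
rewrite theta_poly_cos_add_sub; try lra.
have k_gt0 : 0 < 4 * sin u ^ 4 * sin v ^ 4.
  by have := pow_lt _ 4 su; have := pow_lt _ 4 sv; nra.
split=> [[_ k0] | q0].
- by case: (Rmult_integral _ _ k0) => //; lra.
- by split; [nra | rewrite q0 Rmult_0_r].
Qed.

Lemma cot_sq_lt1 u : 0 < u < PI -> cot u ^ 2 < 1 <-> PI / 4 < u < 3 * PI / 4.
Proof.
move=> u_bnd; have PI_gt0 := PI_RGT_0.
have su : 0 < sin u by apply: sin_gt_0; lra.
have s2 : 0 < sin u ^ 2 by apply: pow_lt.
have cot_sq : cot u ^ 2 * sin u ^ 2 = cos u ^ 2 by rewrite /cot; field; lra.
have -> : cot u ^ 2 < 1 <-> cos (2 * u) < 0.
  rewrite cos_2a; split=> H.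
  - by have := Rmult_lt_compat_r _ _ _ s2 H; lra.
  - by apply: (Rmult_lt_reg_r _ _ _ s2); lra.
split=> [c_lt0 | u_mid]; last by apply: cos_lt_0; lra.
split; apply: Rnot_le_lt => u_le; suff : 0 <= cos (2 * u) by lra.
- by apply: cos_ge_0; lra.
- by apply: cos_ge_0_3PI2; lra.
Qed.

Lemma cot_PI2_sub w : cot (PI / 2 - w) = tan w.
Proof. by rewrite /cot /tan cos_shift sin_shift. Qed.

Lemma arccot_cot v : 0 < v < PI -> arccot (cot v) = v.
Proof.
move=> v_bnd; have -> : cot v = tan (PI / 2 - v) by rewrite -cot_PI2_sub; f_equal; ring.
by rewrite /arccot atan_tan; lra.
Qed.

Lemma cot_arccot y : cot (arccot y) = y.
Proof. by rewrite /arccot cot_PI2_sub tan_atan. Qed.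

Lemma arccot_bounds y : 0 < y -> 0 < arccot y < PI / 2.
Proof.
move=> y_gt0; have := atan_bound y; have := atan_increasing _ _ y_gt0.
by rewrite /arccot atan_0; lra.
Qed.

Lemma cot_gt0 v : 0 < v < PI / 2 -> 0 < cot v.
Proof.
move=> v_bnd; have PI_gt0 := PI_RGT_0.
by apply: Rdiv_lt_0_compat; [apply: cos_gt_0 | apply: sin_gt_0]; lra.
Qed.

(* On the quartic [4 - 3 X^2 = (2 Y - X)^2], so the inner square root in [f_curve t]
   is [2 Y - X] and the outer one is [cot v]. *)
Lemma f_curve_eq t v : 0 < v < PI / 2 -> cot t ^ 2 < cot v ^ 2 ->
  cot_quartic (cot t ^ 2) (cot v ^ 2) = 0 -> f_curve t = v.
Proof.
move=> v_bnd; rewrite /f_curve /cot_quartic.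
have -> : cot t ^ 4 = (cot t ^ 2) ^ 2 by ring.
have cv := cot_gt0 _ v_bnd.
set X := cot t ^ 2; set Y := cot v ^ 2 => XY q0.
have X_ge0 : 0 <= X by apply: pow2_ge_0.
have -> : 4 - 3 * X ^ 2 = (2 * Y - X) ^ 2 by lra.
rewrite sqrt_pow2; last by lra.
have -> : / 2 * (X + (2 * Y - X)) = cot v ^ 2 by rewrite /Y; field.
by rewrite sqrt_pow2 ?arccot_cot; lra.
Qed.

Lemma f_curve_spec t : PI / 4 < t < 3 * PI / 4 ->
  [/\ 0 < f_curve t < PI / 2, cot t ^ 2 < cot (f_curve t) ^ 2
    & cot_quartic (cot t ^ 2) (cot (f_curve t) ^ 2) = 0].
Proof.
move=> t_bnd; have PI_gt0 := PI_RGT_0.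
have X_lt1 := proj2 (cot_sq_lt1 t ltac:(lra)) t_bnd.
rewrite /f_curve /cot_quartic.
have -> : cot t ^ 4 = (cot t ^ 2) ^ 2 by ring.
set X := cot t ^ 2 in X_lt1 *.
have X_ge0 : 0 <= X by apply: pow2_ge_0.
have S_sq : sqrt (4 - 3 * X ^ 2) ^ 2 = 4 - 3 * X ^ 2 by apply: pow2_sqrt; nra.
have S_ge0 := sqrt_pos (4 - 3 * X ^ 2).
have XS : X < sqrt (4 - 3 * X ^ 2) by nra.
set Y := / 2 * (X + sqrt (4 - 3 * X ^ 2)).
have Y_gt0 : 0 < Y by rewrite /Y; lra.
have Y_sq : cot (arccot (sqrt Y)) ^ 2 = Y by rewrite cot_arccot pow2_sqrt; lra.
rewrite Y_sq; split; first exact: arccot_bounds (sqrt_lt_R0 _ Y_gt0).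
- by rewrite /Y; lra.
- by rewrite /Y; nra.
Qed.

Lemma theta2_hat_on_curve x : 1 / 2 < x < 1 -> exists t, PI / 4 < t < 3 * PI / 4 /\
  x = (t + f_curve t) / PI /\ theta2_hat x = (t - f_curve t) / PI.
Proof.
move=> x_bnd; have PI_gt0 := PI_RGT_0.
have [y_gt0 y_lt] := theta2_hat_bounds _ x_bnd.
have S := theta2_hat_spec _ x_bnd.
set y := theta2_hat x in y_gt0 y_lt S *.
set u := PI * ((x + y) / 2); set v := PI * ((x - y) / 2).
have x_eq : x = (u + v) / PI by rewrite /u /v; field; lra.
have y_eq : y = (u - v) / PI by rewrite /u /v; field; lra.
have v_bnd : 0 < v < u by rewrite /u /v; nra.
have uv_lt : u + v < PI by rewrite /u /v; nra.
have v_lt : v < PI / 2 by rewrite /v; nra.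
have su : 0 < sin u by apply: sin_gt_0; lra.
have sv : 0 < sin v by apply: sin_gt_0; lra.
have q0 : cot_quartic (cot u ^ 2) (cot v ^ 2) = 0.
  by apply/(Theta_singular_half_angles _ _ v_bnd uv_lt); rewrite -x_eq -y_eq.
have XY : cot u ^ 2 < cot v ^ 2.
  have : 0 < sin (u + v) * sin (u - v) by apply: Rmult_lt_0_compat; apply: sin_gt_0; lra.
  have k := Rmult_lt_0_compat _ _ (pow_lt _ 2 su) (pow_lt _ 2 sv).
  by rewrite sin_add_mul_sin_sub; try lra; nra.
have X_lt1 : cot u ^ 2 < 1.
  by move: q0; rewrite /cot_quartic; have := pow2_ge_0 (cot u); nra.
have fu : f_curve u = v by apply: f_curve_eq; lra.
exists u; rewrite fu; split; last by [].
by apply/cot_sq_lt1; lra.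
Qed.

Lemma curve_on_theta2_hat_graph t : PI / 4 < t < 3 * PI / 4 ->
  1 / 2 < (t + f_curve t) / PI < 1 /\
  (t - f_curve t) / PI = theta2_hat ((t + f_curve t) / PI).
Proof.
move=> t_bnd; have PI_gt0 := PI_RGT_0.
have [v_bnd XY q0] := f_curve_spec _ t_bnd.
set v := f_curve t in v_bnd XY q0 *.
have st : 0 < sin t by apply: sin_gt_0; lra.
have sv : 0 < sin v by apply: sin_gt_0; lra.
have sin_prod : 0 < sin (t + v) * sin (t - v).
  have k := Rmult_lt_0_compat _ _ (pow_lt _ 2 st) (pow_lt _ 2 sv).
  by rewrite sin_add_mul_sin_sub; try lra; nra.
have tv_gt0 : 0 < t - v.
  apply: Rnot_le_lt => tv_le.
  have : 0 <= sin (v - t) by apply: sin_ge_0; lra.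
  have : 0 < sin (t + v) by apply: sin_gt_0; lra.
  by rewrite -(Ropp_involutive (t - v)) sin_neg Ropp_minus_distr in sin_prod; nra.
have tv_lt : t + v < PI.
  apply: Rnot_le_lt => tv_ge.
  have : sin (t + v) <= 0 by apply: sin_le_0; lra.
  have : 0 < sin (t - v) by apply: sin_gt_0; lra.
  by nra.
have tv_gt : PI / 2 < t + v.
  have cc : cot t * cot v < 1.
    by move: q0; rewrite /cot_quartic; nra.
  have k := Rmult_lt_0_compat _ _ st sv.
  have c_lt0 : cos (t + v) < 0 by rewrite cos_add_cot; try lra; nra.
  apply: Rnot_le_lt => tv_le; suff : 0 <= cos (t + v) by lra.
  by apply: cos_ge_0; lra.
have S : Theta_singular ((t + v) / PI) ((t - v) / PI).
  by apply/Theta_singular_half_angles; lra.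
have x_bnd : 1 / 2 < (t + v) / PI < 1.
  have : (t + v) / PI * PI = t + v by field; lra.
  nra.
split=> //; exact: Theta_singular_unique x_bnd S (theta2_hat_spec _ x_bnd).
Qed.

Theorem proposition5p2 :
  (* (i) *)
  (forall h t1 t2 : R, 0 < h -> 0 < t1 < 1 -> t1 <= 1/2 ->
     0 < t2 < t1 -> Theta h t1 t2 \in unitmx)
  /\
  (* (ii) *)
  (exists hat : R -> R,
     (forall t1 : R, 1/2 < t1 < 1 -> 0 < hat t1 < 1/2) /\
     (forall h t1 t2 : R, 0 < h -> 1/2 < t1 < 1 -> 0 < t2 < t1 ->
        (Theta h t1 t2 \notin unitmx <-> t2 = hat t1)) /\
     (forall x y : R,
        (1/2 < x < 1 /\ y = hat x) <->
        (exists t : R, PI/4 < t < 3 * PI / 4 /\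
           x = (t + f_curve t) / PI /\ y = (t - f_curve t) / PI))).
Proof.
split=> [h t1 t2 h_gt0 _ t1_le t2_bnd | ].
  by apply/(Theta_unitmxP _ _ _ h_gt0); apply: Theta_det_neq0.
exists theta2_hat; split; first exact: theta2_hat_bounds.
split=> [h t1 t2 h_gt0 t1_bnd t2_bnd | x y].
  rewrite -Theta_det_eq0_theta2_hat //.
  have unitP := Theta_unitmxP _ t1 t2 h_gt0.
  split=> [/unitP singular | d0]; last by apply/unitP.
  by case: (Req_dec (Theta_det t1 t2) 0).
split=> [[x_bnd ->] | [t [t_bnd [-> ->]]]]; first exact: theta2_hat_on_curve.
by have [] := curve_on_theta2_hat_graph _ t_bnd.
Qed.
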